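(* Let $G$ be a terrain visibility graph. Then for every integer $k \ge 6$, $G$ contains no induced subgraph isomorphic to the complement $\overline{C_k}$ of the cycle on $k$ vertices (i.e., $G$ contains no antihole of size at least $6$).
   Context: A (1.5-dimensional) terrain is an $x$-monotone polygonal chain in the plane given by a finite set $V$ of terrain vertices with pairwise distinct $x$-coordinates. Write $p<q$ if $p^x<q^x$. The terrain visibility graph has vertex set $V$, and for $p<q$ the pair $\{p,q\}$ is an edge if and only if every terrain vertex $r$ with $p<r<q$ satisfies $r^y < p^y + (q^y-p^y)\frac{r^x-p^x}{q^x-p^x}$ (i.e., no vertex between them lies on or above the segment $pq$). A graph is a terrain visibility graph if it is isomorphic to the visibility graph of some terrain. *)

From HB Require Import structures.
From mathcomp Require Import all_boot all_order all_algebra.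
From mathcomp Require Import reals.
Set Implicit Arguments. Unset Strict Implicit. Unset Printing Implicit Defensive.
Import Order.TTheory GRing.Theory Num.Theory.
Local Open Scope ring_scope.

(* The chain is x-monotone, i.e. vertices are
   joined in order of increasing x-coordinate; only the vertex set matters
   for the visibility graph. *)

Definition sees (R : realType) (n : nat) (px py : 'I_n -> R) (p q : 'I_n) : Prop :=
  px p < px q /\
  forall r : 'I_n, px p < px r -> px r < px q ->
    py r < py p + (py q - py p) * ((px r - px p) / (px q - px p)).

Definition terrain_vis (R : realType) (n : nat) (px py : 'I_n -> R) (p q : 'I_n) : Prop :=
  sees px py p q \/ sees px py q p.

Definition is_terrain_visibility_graph (R : realType) (T : finType) (E : rel T) : Prop :=
  exists (n : nat) (px py : 'I_n -> R) (f : T -> 'I_n),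
    injective px /\ bijective f /\
    forall x y : T, E x y <-> terrain_vis px py (f x) (f y).

Definition cycle_adj (k : nat) (i j : 'I_k) : bool :=
  (j == (i.+1 %% k)%N :> nat) || (i == (j.+1 %% k)%N :> nat).

Definition has_induced_antihole (T : finType) (E : rel T) (k : nat) : Prop :=
  exists g : 'I_k -> T, injective g /\
    forall i j : 'I_k, i != j -> (E (g i) (g j) <-> ~~ cycle_adj i j).

From mathcomp Require Import all_boot all_order all_algebra.
From mathcomp Require Import reals.
From mathcomp Require Import ring zify.

(* Comparing slopes gives two rules for terrain vertices a, b, c, d in
   increasing x-order: if a sees c and b sees d then a sees d; and if a-b, b-c,
   c-d are visible but neither diagonal is, then a does not see d.
   Let L be the leftmost vertex of an antihole, a and b its two cycle
   neighbours (hidden from L), u and v the next vertices beyond a and b, and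
   s and t the vertices beyond those (s = t when k = 6).  Say a lies left of b.
   Through L, s pushes u to the right of b and t pushes v to the right of a,
   hence of b; then a, b, u, v violate the first rule if v comes before u and
   the second one otherwise. *)

Set Implicit Arguments. Unset Strict Implicit. Unset Printing Implicit Defensive.
Import Order.TTheory GRing.Theory Num.Theory.
Local Open Scope ring_scope.

Section TerrainVisibility.
Variables (R : realType) (n : nat) (px py : 'I_n -> R).
Hypothesis px_inj : injective px.

Local Notation sees := (sees px py).
Local Notation vis := (terrain_vis px py).

Definition slope (p q : 'I_n) : R := (py q - py p) / (px q - px p).

Lemma sees_slope p q : px p < px q ->
  sees p q <-> forall r, px p < px r -> px r < px q -> slope p r < slope p q.
Proof.
move=> lt_pq; have below r : px p < px r ->
    (py r < py p + (py q - py p) * ((px r - px p) / (px q - px p))) =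
    (slope p r < slope p q).
  move=> lt_pr; rewrite /slope ltr_pdivrMr ?subr_gt0 // -ltrBlDl.
  by rewrite mulrA mulrAC.
split=> [[_ below_pq] r lt_pr lt_rq | slope_lt]; first by rewrite -below // below_pq.
by split=> // r lt_pr lt_rq; rewrite below // slope_lt.
Qed.

Lemma slope_mediant p q r : px p < px q -> px q < px r ->
  slope p r * (px r - px p) = slope p q * (px q - px p) + slope q r * (px r - px q).
Proof.
move=> lt_pq lt_qr; have lt_pr := lt_trans lt_pq lt_qr.
by rewrite /slope !divfK ?gt_eqF ?subr_gt0 //; ring.
Qed.

(* Each comparison in slope_ltl and slope_ltr says that q lies strictly below the
   line through p and r. *)
Lemma slope_ltl p q r : px p < px q -> px q < px r ->
  (slope p q < slope p r) = (slope p q < slope q r).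
Proof.
move=> lt_pq lt_qr; have lt_pr := lt_trans lt_pq lt_qr.
rewrite -(ltr_pM2r (_ : 0 < px r - px p)) ?subr_gt0 // (slope_mediant lt_pq lt_qr).
have -> : px r - px p = (px q - px p) + (px r - px q) by ring.
by rewrite mulrDr ltrD2l -!(mulrC (px r - px q)) ltr_pM2l ?subr_gt0.
Qed.

Lemma slope_ltr p q r : px p < px q -> px q < px r ->
  (slope p r < slope q r) = (slope p q < slope q r).
Proof.
move=> lt_pq lt_qr; have lt_pr := lt_trans lt_pq lt_qr.
rewrite -(ltr_pM2r (_ : 0 < px r - px p)) ?subr_gt0 // (slope_mediant lt_pq lt_qr).
have -> : px r - px p = (px q - px p) + (px r - px q) by ring.
by rewrite (mulrDr _ (px q - px p)) ltrD2r -!(mulrC (px q - px p)) ltr_pM2l ?subr_gt0.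
Qed.

Lemma sees_cross a b c d : px a < px b -> px b < px c -> px c < px d ->
  sees a c -> sees b d -> sees a d.
Proof.
move=> lt_ab lt_bc lt_cd.
have [lt_ac lt_bd] := (lt_trans lt_ab lt_bc, lt_trans lt_bc lt_cd).
have lt_ad := lt_trans lt_ac lt_cd.
move=> /(sees_slope lt_ac) see_ac /(sees_slope lt_bd) see_bd.
have abc : slope a b < slope b c by rewrite -slope_ltl // see_ac.
have acd : slope a c < slope a d.
  rewrite slope_ltl //; apply: (@lt_trans _ _ (slope b c)).
    by rewrite slope_ltr.
  by rewrite -slope_ltl // see_bd.
have abd : slope a d < slope b d.
  by rewrite slope_ltr ?(lt_trans abc) ?see_bd.
apply/(sees_slope lt_ad) => r lt_ar lt_rd.
have [lt_rc | le_cr] := ltP (px r) (px c); first exact: lt_trans (see_ac _ _ _) acd.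
have lt_br := lt_le_trans lt_bc le_cr.
rewrite slope_ltl // -slope_ltr //; apply: lt_trans abd _.
by rewrite slope_ltr // -slope_ltl // see_bd.
Qed.

Lemma sees_join a b c : px a < px b -> px b < px c ->
  sees a b -> sees b c -> slope a b < slope a c -> sees a c.
Proof.
move=> lt_ab lt_bc /(sees_slope lt_ab) see_ab /(sees_slope lt_bc) see_bc abc.
have lt_ac := lt_trans lt_ab lt_bc.
apply/(sees_slope lt_ac) => r lt_ar lt_rc.
have [lt_rb | lt_br | /px_inj ->] := ltgtP (px r) (px b) => //.
  exact: lt_trans (see_ab _ _ _) abc.
rewrite slope_ltl // -slope_ltr //; apply: (@lt_trans _ _ (slope b c)).
  by rewrite slope_ltr // -slope_ltl.
by rewrite slope_ltr // -slope_ltl // see_bc.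
Qed.

Lemma sees_chordless_quad a b c d : px a < px b -> px b < px c -> px c < px d ->
  sees a b -> sees b c -> sees c d -> ~ sees a c -> ~ sees b d -> ~ sees a d.
Proof.
move=> lt_ab lt_bc lt_cd see_ab see_bc see_cd hid_ac hid_bd.
have [lt_ac lt_bd] := (lt_trans lt_ab lt_bc, lt_trans lt_bc lt_cd).
have lt_ad := lt_trans lt_ac lt_cd.
have bca : slope b c <= slope a b.
  rewrite leNgt -slope_ltl //; apply/negP => abc.
  exact: hid_ac (sees_join lt_ab lt_bc see_ab see_bc abc).
have cdb : slope c d <= slope b c.
  rewrite leNgt -slope_ltl //; apply/negP => bcd.
  exact: hid_bd (sees_join lt_bc lt_cd see_bc see_cd bcd).
move=> /(sees_slope lt_ad) see_ad.
have adc : slope a d < slope c d by rewrite slope_ltr // -slope_ltl // see_ad.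
have := lt_le_trans (lt_trans (see_ad b lt_ab lt_bd) adc) (le_trans cdb bca).
by rewrite ltxx.
Qed.

Lemma terrain_vis_sym p q : vis p q -> vis q p.
Proof. by case; [right | left]. Qed.

Lemma terrain_visE p q : px p < px q -> vis p q <-> sees p q.
Proof.
move=> lt_pq; split=> [[// | [lt_qp _]] | ]; last by left.
by have := lt_trans lt_pq lt_qp; rewrite ltxx.
Qed.

Lemma terrain_vis_neq p q : vis p q -> px p != px q.
Proof. by case=> -[lt_pq _]; rewrite ?(lt_eqF lt_pq) ?(gt_eqF lt_pq). Qed.

Lemma terrain_vis_cross a b c d : px a < px b -> px b < px c -> px c < px d ->
  vis a c -> vis b d -> vis a d.
Proof.
move=> lt_ab lt_bc lt_cd.
have [lt_ac lt_bd] := (lt_trans lt_ab lt_bc, lt_trans lt_bc lt_cd).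
rewrite !terrain_visE // ?(lt_trans lt_ac lt_cd) //; exact: sees_cross.
Qed.

Lemma terrain_vis_chordless_quad a b c d : px a < px b -> px b < px c -> px c < px d ->
  vis a b -> vis b c -> vis c d -> ~ vis a c -> ~ vis b d -> ~ vis a d.
Proof.
move=> lt_ab lt_bc lt_cd.
have [lt_ac lt_bd] := (lt_trans lt_ab lt_bc, lt_trans lt_bc lt_cd).
rewrite !terrain_visE // ?(lt_trans lt_ac lt_cd) //; exact: sees_chordless_quad.
Qed.

Lemma hidden_left_of_pair L p q d : px L < px p -> px L < px q -> p != q ->
  vis L p -> vis L q -> ~ vis p q -> vis p d -> vis q d -> ~ vis L d -> px d < px p.
Proof.
move=> lt_Lp lt_Lq neq_pq Lp Lq hid_pq pd qd hid_Ld.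
move: (terrain_vis_neq pd) (terrain_vis_neq qd).
rewrite !neq_lt => /orP[lt_pd | //] /orP[lt_qd | lt_dq]; exfalso.
- move: neq_pq; rewrite -(inj_eq px_inj) neq_lt => /orP[lt_pq | lt_qp].
  + exact: hid_Ld (terrain_vis_cross lt_Lp lt_pq lt_qd Lq pd).
  + exact: hid_Ld (terrain_vis_cross lt_Lq lt_qp lt_pd Lp qd).
- exact: terrain_vis_chordless_quad lt_Lp lt_pd lt_dq Lp pd
    (terrain_vis_sym qd) hid_Ld hid_pq Lq.
Qed.

Lemma antihole_around_leftmost_lt L a b u v s t :
  px L < px a -> px L < px u -> px L < px v -> px L < px s -> px L < px t ->
  px a < px b -> u != s -> v != t ->
  ~ vis L a -> ~ vis L b -> vis L u -> vis L v -> vis L s -> vis L t ->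
  vis a b -> vis b u -> ~ vis a u -> vis a v -> ~ vis b v -> vis u v ->
  vis b s -> ~ vis u s -> vis a t -> ~ vis v t -> False.
Proof.
move=> lt_La lt_Lu lt_Lv lt_Ls lt_Lt lt_ab neq_us neq_vt hLa hLb vLu vLv vLs vLt.
move=> vab vbu hau vav hbv vuv vbs hus vat hvt.
have lt_bu : px b < px u := hidden_left_of_pair lt_Lu lt_Ls neq_us vLu vLs hus
  (terrain_vis_sym vbu) (terrain_vis_sym vbs) hLb.
have lt_av : px a < px v := hidden_left_of_pair lt_Lv lt_Lt neq_vt vLv vLt hvt
  (terrain_vis_sym vav) (terrain_vis_sym vat) hLa.
have lt_bv : px b < px v.
  have : px v != px b by apply/eqP => /px_inj eq_vb; apply: hLb; rewrite -eq_vb.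
  rewrite neq_lt => /orP[lt_vb | //].
  by case: hLb; exact: terrain_vis_cross lt_La lt_av lt_vb vLv vab.
move: (terrain_vis_neq vuv); rewrite neq_lt => /orP[lt_uv | lt_vu].
- exact: terrain_vis_chordless_quad lt_ab lt_bu lt_uv vab vbu vuv hau hbv vav.
- exact: hau (terrain_vis_cross lt_ab lt_bv lt_vu vav vbu).
Qed.

Lemma antihole_around_leftmost L a b u v s t :
  px L < px a -> px L < px b -> px L < px u -> px L < px v -> px L < px s -> px L < px t ->
  u != s -> v != t ->
  ~ vis L a -> ~ vis L b -> vis L u -> vis L v -> vis L s -> vis L t ->
  vis a b -> vis b u -> ~ vis a u -> vis a v -> ~ vis b v -> vis u v ->
  vis b s -> ~ vis u s -> vis a t -> ~ vis v t -> False.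
Proof.
move=> lt_La lt_Lb lt_Lu lt_Lv lt_Ls lt_Lt neq_us neq_vt hLa hLb vLu vLv vLs vLt.
move=> vab vbu hau vav hbv vuv vbs hus vat hvt.
move: (terrain_vis_neq vab); rewrite neq_lt => /orP[lt_ab | lt_ba].
- exact: antihole_around_leftmost_lt lt_La lt_Lu lt_Lv lt_Ls lt_Lt lt_ab
    neq_us neq_vt hLa hLb vLu vLv vLs vLt vab vbu hau vav hbv vuv vbs hus vat hvt.
- exact: antihole_around_leftmost_lt lt_Lb lt_Lv lt_Lu lt_Lt lt_Ls lt_ba
    neq_vt neq_us hLb hLa vLv vLu vLt vLs (terrain_vis_sym vab) vav hbv
    vbu hau (terrain_vis_sym vuv) vat hvt vbs hus.
Qed.

End TerrainVisibility.

Definition ord_rot (k : nat) (l : 'I_k) (d : nat) : 'I_k :=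
  Ordinal (ltn_pmod (l + d) (leq_trans (ltn0Sn l) (ltn_ord l))).

Lemma ord_rot0 k (l : 'I_k) : ord_rot l 0 = l.
Proof. by apply: val_inj; rewrite /= addn0 modn_small. Qed.

Lemma ord_rot_inj k (l : 'I_k) i j : (i < k)%N -> (j < k)%N ->
  ord_rot l i = ord_rot l j -> i = j.
Proof.
by move=> lt_ik lt_jk /(congr1 val) /= /eqP; rewrite eqn_modDl !modn_small // => /eqP.
Qed.

Lemma cycle_adj_rot k (l : 'I_k) i j : (i < k)%N -> (j < k)%N ->
  cycle_adj (ord_rot l i) (ord_rot l j) =
  [|| j == i.+1, i == j.+1, (i == 0) && (j == k.-1) | (j == 0) && (i == k.-1)]%N.
Proof.
move=> lt_ik lt_jk.
have succ_mod m : (m < k)%N -> (m.+1 %% k = if m.+1 == k then 0 else m.+1)%N.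
  by move=> lt_mk; case: eqP => [-> | ?]; [exact: modnn | apply: modn_small; lia].
have rotS m : (((l + m) %% k).+1 %% k = (l + m.+1) %% k)%N.
  by rewrite -addn1 modnDml addn1 addnS.
rewrite /cycle_adj /= !rotS !eqn_modDl (modn_small lt_ik) (modn_small lt_jk).
by rewrite !succ_mod //; case: (i.+1 =P k); case: (j.+1 =P k); lia.
Qed.

Theorem theorem5 (R : realType) (T : finType) (E : rel T) :
  is_terrain_visibility_graph R E ->
  forall k : nat, (6 <= k)%N -> ~ has_induced_antihole E k.
Proof.
move=> [n [px [py [f [px_inj [f_bij Evis]]]]]] k k_ge6 [g [g_inj g_antihole]].
have k_gt0 : (0 < k)%N by lia.
pose h i := f (g i).
have h_inj : injective h by move=> i j /(bij_inj f_bij) /g_inj.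
have [l _ l_min] := arg_minP (fun i => px (h i)) (isT : xpredT (Ordinal k_gt0)).
pose w d := h (ord_rot l d).
have w_neq i j : (i < k)%N -> (j < k)%N -> (i != j)%N -> w i != w j.
  by move=> lt_ik lt_jk; apply: contra_neq => /h_inj /ord_rot_inj ->.
have w0_left d : (0 < d < k)%N -> px (w 0%N) < px (w d).
  move=> /andP[d_gt0 lt_dk]; rewrite lt_def (inj_eq px_inj) w_neq ?gtn_eqF //=.
  by rewrite /w ord_rot0 l_min.
have w_visE i j : (i < k)%N -> (j < k)%N -> (i != j)%N ->
    terrain_vis px py (w i) (w j) <->
    ~~ [|| j == i.+1, i == j.+1, (i == 0) && (j == k.-1) | (j == 0) && (i == k.-1)]%N.
  move=> lt_ik lt_jk neq_ij; rewrite -(cycle_adj_rot l) // -Evis.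
  by apply: g_antihole; apply: contra_neq neq_ij => /ord_rot_inj ->.
apply: (antihole_around_leftmost px_inj (py := py) (L := w 0%N) (a := w k.-1) (b := w 1%N)
  (u := w (k - 2)%N) (v := w 2%N) (s := w (k - 3)%N) (t := w 3%N)).
all: first [apply: w0_left | apply: w_neq | rewrite w_visE]; lia.
Qed.
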